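(* With $\mathsf{pure}\ x := \hat x$ and $\mathsf{ap}\ F\ x := F@x$, the step functions satisfy the applicative functor laws up to $\asymp_{\mathfrak{S}}$ (where the setoids of function types carry extensional equality): for all appropriately typed $u,v,w$ (step functions) and $f$, $x$, $y$ (values), (Identity) $\hat{\mathbf{I}} @ v \asymp v$; (Composition) $\hat{\mathbf{B}} @ u @ v @ w \asymp u @ (v @ w)$; (Homomorphism) $\hat f @ \hat x \asymp \widehat{f x}$; (Interchange) $u @ \hat y \asymp \widehat{\mathrm{ev}_y} @ u$, where $\mathbf{I}x := x$, $\mathbf{B}fgx := f(gx)$ and $\mathrm{ev}_y := \lambda f. f\,y$.
   Context: Step functions. For a type $X$, $\mathfrak{S}X$ is the inductive type of (formal, rational) step functions on $[0,1]$: it has the constructors $\mathsf{const}\ x$ for $x\in X$ (also written $\hat x$), and $\mathsf{glue}\ o\ f\ g$ for $o\in(0,1)\cap\mathbb{Q}$ and $f,g\in\mathfrak{S}X$. Split. For $a\in(0,1)\cap\mathbb{Q}$: $\mathsf{SplitL}\ \hat x\ a := \hat x$, $\mathsf{SplitR}\ \hat x\ a:=\hat x$, and $\mathsf{SplitL}(\mathsf{glue}\ o\ f_l\ f_r)\ a :=$ $\mathsf{SplitL}\ f_l\ (a/o)$ if $a<o$; $f_l$ if $a=o$; $\mathsf{glue}\ (o/a)\ f_l\ (\mathsf{SplitL}\ f_r\ \tfrac{a-o}{1-o})$ if $a>o$. $\mathsf{SplitR}(\mathsf{glue}\ o\ f_l\ f_r)\ a :=$ $\mathsf{glue}\ \tfrac{o-a}{1-a}\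 (\mathsf{SplitR}\ f_l\ (a/o))\ f_r$ if $a<o$; $f_r$ if $a=o$; $\mathsf{SplitR}\ f_r\ \tfrac{a-o}{1-o}$ if $a>o$. Map and ap. $\mathsf{map}\ \varphi\ \hat x := \widehat{\varphi x}$, $\mathsf{map}\ \varphi\ (\mathsf{glue}\ o\ f\ g):=\mathsf{glue}\ o\ (\mathsf{map}\ \varphi\ f)(\mathsf{map}\ \varphi\ g)$. For $F\in\mathfrak{S}(X\Rightarrow Y)$, $x\in\mathfrak{S}X$: $\hat\varphi @ x := \mathsf{map}\ \varphi\ x$, and $(\mathsf{glue}\ o\ F_l\ F_r) @ x := \mathsf{glue}\ o\ (F_l @ \mathsf{SplitL}\ x\ o)\ (F_r @ \mathsf{SplitR}\ x\ o)$. $@$ associates to the left. Write $f\{\circledast\}g := (\lambda u v. u\circledast v)\circ f @ g$ where $\varphi\circ x:=\mathsf{map}\ \varphi\ x$. Fold. $\mathsf{fold}\ \varphi\ \psi\ \hat x:=\varphi x$, $\mathsf{fold}\ \varphi\ \psi\ (\mathsf{glue}\ o\ f\ g) := \psi\ o\ (\mathsf{fold}\ \varphi\ \psi\ f)(\mathsf{fold}\ \varphi\ \psi\ g)$. $\mathsf{fold}_\star$ is $\mathsf{fold}\ \mathrm{id}\ (\lambda o\,p\,q.\ p\wedge q)$. Equivalence. For a setoid $X$ and $f,g\in\mathfrak{S}X$, $f\asymp_{\mathfrak{S}X} g := \mathsf{fold}_\star(f\{\asymp_X\}g)$. *)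

From HB Require Import structures.
From mathcomp Require Import all_boot all_order all_algebra.
Set Implicit Arguments. Unset Strict Implicit. Unset Printing Implicit Defensive.
Import Order.TTheory GRing.Theory Num.Theory.
From Stdlib Require Import RelationClasses.
Local Open Scope ring_scope.

Definition unit_open (q : rat) : bool := (0 < q) && (q < 1).
Definition Q01 := {q : rat | unit_open q}.

(* Formal rational step functions on [0,1]. *)
Inductive Step (X : Type) : Type :=
| const : X -> Step X
| glue : Q01 -> Step X -> Step X -> Step X.
Arguments const {X} _.
Arguments glue {X} _ _ _.

Lemma ratio_open_l (a o : rat) : unit_open a -> unit_open o -> a < o -> unit_open (a / o).
Proof.
move=> /andP[a0 a1] /andP[o0 o1] ao; apply/andP; split.
  by rewrite divr_gt0.
by rewrite ltr_pdivrMr // mul1r.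
Qed.

Lemma ratio_open_r (a o : rat) : unit_open a -> unit_open o -> o < a ->
  unit_open ((a - o) / (1 - o)).
Proof.
move=> /andP[a0 a1] /andP[o0 o1] oa; apply/andP; split.
  by rewrite divr_gt0 // subr_gt0.
by rewrite ltr_pdivrMr ?subr_gt0 // mul1r ltrD2r.
Qed.

Lemma ratio_open_gl (a o : rat) : unit_open a -> unit_open o -> o < a -> unit_open (o / a).
Proof. by move=> Ha Ho oa; apply: ratio_open_l. Qed.

Lemma ratio_open_gr (a o : rat) : unit_open a -> unit_open o -> a < o ->
  unit_open ((o - a) / (1 - a)).
Proof. by move=> Ha Ho ao; apply: ratio_open_r. Qed.

Definition cmp3 (a o : rat) : {a < o} + {a = o} + {o < a}.
Proof.
case: (boolP (a < o)) => h; first by left; left.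
case: (boolP (o < a)) => h'; first by right.
left; right; move: h h'; case: ltgtP => //.
Defined.

(* SplitL f a : the part of f on [0,a], rescaled to [0,1]. *)
Fixpoint SplitL {X} (f : Step X) (a : Q01) : Step X :=
  match f with
  | const x => const x
  | glue o fl fr =>
      match cmp3 (val a) (val o) with
      | inleft (left ao) => SplitL fl (exist unit_open _ (ratio_open_l (valP a) (valP o) ao))
      | inleft (right _) => fl
      | inright oa =>
          glue (exist unit_open _ (ratio_open_gl (valP a) (valP o) oa)) fl
               (SplitL fr (exist unit_open _ (ratio_open_r (valP a) (valP o) oa)))
      end
  end.

(* SplitR f a : the part of f on [a,1], rescaled to [0,1]. *)
Fixpoint SplitR {X} (f : Step X) (a : Q01) : Step X :=
  match f with
  | const x => const x
  | glue o fl fr =>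
      match cmp3 (val a) (val o) with
      | inleft (left ao) =>
          glue (exist unit_open _ (ratio_open_gr (valP a) (valP o) ao))
               (SplitR fl (exist unit_open _ (ratio_open_l (valP a) (valP o) ao))) fr
      | inleft (right _) => fr
      | inright oa => SplitR fr (exist unit_open _ (ratio_open_r (valP a) (valP o) oa))
      end
  end.

Fixpoint smap {X Y} (phi : X -> Y) (f : Step X) : Step Y :=
  match f with
  | const x => const (phi x)
  | glue o f g => glue o (smap phi f) (smap phi g)
  end.

Fixpoint sap {X Y} (F : Step (X -> Y)) (x : Step X) : Step Y :=
  match F with
  | const phi => smap phi x
  | glue o Fl Fr => glue o (sap Fl (SplitL x o)) (sap Fr (SplitR x o))
  end.

Fixpoint sfold {X Y} (phi : X -> Y) (psi : Q01 -> Y -> Y -> Y) (f : Step X) : Y :=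
  match f with
  | const x => phi x
  | glue o f g => psi o (sfold phi psi f) (sfold phi psi g)
  end.

Definition fold_star (f : Step Prop) : Prop := sfold id (fun _ p q => p /\ q) f.

Record Setoid := { carrier :> Type; eqv : carrier -> carrier -> Prop;
                   eqv_equiv : RelationClasses.Equivalence eqv }.

Definition fun_eqv (X Y : Setoid) (f g : X -> Y) : Prop := forall x, eqv (f x) (g x).
Lemma fun_eqv_equiv (X Y : Setoid) : RelationClasses.Equivalence (@fun_eqv X Y).
Proof.
have E := eqv_equiv Y; split.
- by move=> f x; apply: (@Equivalence_Reflexive _ _ E).
- by move=> f g H x; apply: (@Equivalence_Symmetric _ _ E).
- by move=> f g h H1 H2 x; apply: (@Equivalence_Transitive _ _ E _ _ _ (H1 x) (H2 x)).
Qed.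
Definition FunSetoid (X Y : Setoid) : Setoid :=
  {| carrier := X -> Y; eqv := @fun_eqv X Y; eqv_equiv := fun_eqv_equiv X Y |}.

Definition slift2 {X Y Z} (op : X -> Y -> Z) (f : Step X) (g : Step Y) : Step Z :=
  sap (smap op f) g.

Definition step_eqv (X : Setoid) (f g : Step X) : Prop :=
  fold_star (slift2 (@eqv X) f g).

Definition pure {X} (x : X) : Step X := const x.
Definition combI {X : Type} (x : X) : X := x.
Definition combB {X Y Z : Type} (f : Y -> Z) (g : X -> Y) (x : X) : Z := f (g x).
Definition ev {X Y : Type} (y : X) (f : X -> Y) : Y := f y.
Arguments step_eqv X f g : clear implicits.

From mathcomp Require Import all_boot all_order all_algebra.
Set Implicit Arguments. Unset Strict Implicit. Unset Printing Implicit Defensive.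
From Stdlib Require Import RelationClasses.
Import Order.TTheory GRing.Theory Num.Theory.
Local Open Scope ring_scope.

(* A formal step function denotes an honest function on an
   interval: [denote f L H t] is the value of f at t once [0,1] has been
   stretched onto [L,H), the gluing point o of [glue o f g] being sent to
   [cut o L H = L + o (H - L)].  All the rescalings performed by [SplitL] and
   [SplitR] are affine reparametrisations of subintervals, so
   - [SplitL f a] denotes f on [L, cut a L H) and [SplitR f a] denotes f on
     [cut a L H, H);
   - consequently [F @ x] denotes the pointwise application t |-> F(t) (x(t));
   - [fold_star h] holds as soon as h denotes a function that is everywhere
     true on [0,1), hence [f ≍ g] holds whenever f and g are pointwise
     equivalent.
   Each applicative law then reduces to a pointwise identity between values,
   which holds by computation and reflexivity of the setoid equivalence. *)

Definition cut {R : ringType} (p L H : R) : R := L + p * (H - L).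
Arguments cut : simpl never.

Lemma cut_cutL (R : fieldType) (p q L H : R) : q != 0 -> cut (p / q) L (cut q L H) = cut p L H.
Proof. by move=> q0; rewrite /cut [L + q * _]addrC addrK mulrA divfK. Qed.

Lemma cut_cutR (R : fieldType) (p q L H : R) : q != 1 ->
  cut ((p - q) / (1 - q)) (cut q L H) H = cut p L H.
Proof.
move=> q1; have q1' : 1 - q != 0 by rewrite subr_eq0 eq_sym.
rewrite /cut; have -> : H - (L + q * (H - L)) = (1 - q) * (H - L).
  by rewrite mulrBl mul1r opprD addrA.
by rewrite mulrA divfK // -addrA -mulrDl (addrC q) subrK.
Qed.

Lemma ltr_cut (R : numDomainType) (p q L H : R) : L < H -> (cut p L H < cut q L H) = (p < q).
Proof. by move=> LH; rewrite /cut ltrD2l ltr_pM2r // subr_gt0. Qed.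

Lemma cut_inside (o : Q01) (L H : rat) : L < H -> L < cut (val o) L H < H.
Proof.
move=> LH; case/andP: (valP o) => o0 o1.
have := ltr_cut 0 (val o) LH; have := ltr_cut (val o) 1 LH.
by rewrite /cut !mul0r !mul1r addr0 [L + (H - L)]addrC subrK o0 o1 => -> ->.
Qed.

Fixpoint denote {X} (f : Step X) (L H t : rat) : X :=
  match f with
  | const x => x
  | glue o l r => if t < cut (val o) L H then denote l L (cut (val o) L H) t
                  else denote r (cut (val o) L H) H t
  end.

Lemma denote_SplitL X (f : Step X) (a : Q01) L H t :
  L < H -> L <= t -> t < cut (val a) L H ->
  denote (SplitL f a) L (cut (val a) L H) t = denote f L H t.
Proof.
elim: f a L H t => [x|o fl IHl fr IHr] a L H t LH Lt ta //=.
have /andP[Lo oH] := cut_inside o LH.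
case/andP: (valP o) => o0 o1; case/andP: (valP a) => a0 _.
case: cmp3 => [[ao|ao]|oa].
- rewrite (lt_trans ta _) ?ltr_cut //.
  rewrite -(cut_cutL (val a) L H (negbT (gt_eqF o0))) IHl //=.
  by rewrite cut_cutL ?gt_eqF.
- have to : t < cut (sval o) L H by rewrite -ao.
  by rewrite ao to.
- rewrite /= (cut_cutL (val o) L H (negbT (gt_eqF a0))); case: ifP => // tNo.
  rewrite -{1}(cut_cutR (val a) L H (negbT (lt_eqF o1))) IHr //=.
  + by rewrite leNgt tNo.
  + by rewrite cut_cutR ?lt_eqF.
Qed.

Lemma denote_SplitR X (f : Step X) (a : Q01) L H t :
  L < H -> cut (val a) L H <= t -> t < H ->
  denote (SplitR f a) (cut (val a) L H) H t = denote f L H t.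
Proof.
elim: f a L H t => [x|o fl IHl fr IHr] a L H t LH mt tH //=.
have /andP[Lo oH] := cut_inside o LH.
case/andP: (valP o) => o0 o1; case/andP: (valP a) => _ a1.
case: cmp3 => [[ao|ao]|oa].
- rewrite /= (cut_cutR (val o) L H (negbT (lt_eqF a1))); case: ifP => // to.
  rewrite -{1}(cut_cutL (val a) L H (negbT (gt_eqF o0))) IHl //=.
  by rewrite cut_cutL ?gt_eqF.
- have ot : cut (sval o) L H <= t by rewrite -ao.
  by rewrite ao ltNge ot.
- have ot : cut (val o) L H <= t by rewrite (le_trans _ mt) // ltW ?ltr_cut.
  rewrite ltNge ot /= -(cut_cutR (val a) L H (negbT (lt_eqF o1))) IHr //=.
  by rewrite cut_cutR ?lt_eqF.
Qed.

Lemma denote_smap X Y (phi : X -> Y) (f : Step X) L H t :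
  denote (smap phi f) L H t = phi (denote f L H t).
Proof. by elim: f L H t => [x|o fl IHl fr IHr] L H t //=; case: ifP. Qed.

Lemma denote_sap X Y (F : Step (X -> Y)) (x : Step X) L H t :
  L < H -> L <= t -> t < H -> denote (sap F x) L H t = denote F L H t (denote x L H t).
Proof.
elim: F x L H t => [phi|o Fl IHl Fr IHr] x L H t LH Lt tH /=.
  by rewrite denote_smap.
have /andP[Lo oH] := cut_inside o LH.
case: ifP => to; first by rewrite IHl // denote_SplitL.
by rewrite IHr ?denote_SplitR // leNgt to.
Qed.

Lemma fold_star_denote (h : Step Prop) L H :
  L < H -> (forall t, L <= t -> t < H -> denote h L H t) -> fold_star h.
Proof.
rewrite /fold_star; elim: h L H => [p|o hl IHl hr IHr] L H LH hLH /=.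
  exact: (hLH L).
have /andP[Lo oH] := cut_inside o LH; split.
- apply: (IHl L (cut (val o) L H)) => // t Lt to.
  by have := hLH t Lt (lt_trans to oH); rewrite /= to.
- apply: (IHr (cut (val o) L H) H) => // t ot tH.
  by have := hLH t (le_trans (ltW Lo) ot) tH; rewrite /= ltNge ot.
Qed.

Lemma step_eqv_denote (X : Setoid) (f g : Step X) :
  (forall t, 0 <= t -> t < 1 -> eqv (denote f 0 1 t) (denote g 0 1 t)) ->
  step_eqv X f g.
Proof.
move=> fg; apply: (fold_star_denote (L := 0) (H := 1)) => // t t0 t1.
by rewrite /slift2 denote_sap // denote_smap; apply: fg.
Qed.

Lemma eqv_refl (X : Setoid) (x : X) : eqv x x.
Proof. exact: (@Equivalence_Reflexive _ _ (eqv_equiv X)). Qed.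

Theorem mainTheorem4 :
  (* Identity *)
  (forall (X : Setoid) (v : Step X),
      step_eqv X (sap (pure (@combI X)) v) v) /\
  (* Composition *)
  (forall (X Y Z : Setoid) (u : Step (Y -> Z)) (v : Step (X -> Y)) (w : Step X),
      step_eqv Z (sap (sap (sap (pure (@combB X Y Z)) u) v) w) (sap u (sap v w))) /\
  (* Homomorphism *)
  (forall (X Y : Setoid) (f : X -> Y) (x : X),
      step_eqv Y (sap (pure f) (pure x)) (pure (f x))) /\
  (* Interchange *)
  (forall (X Y : Setoid) (u : Step (X -> Y)) (y : X),
      step_eqv Y (sap u (pure y)) (sap (pure (@ev X Y y)) u)).
Proof.
split; [|split; [|split]].
- move=> X v; apply: step_eqv_denote => t t0 t1.
  by rewrite denote_sap //; apply: eqv_refl.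
- move=> X Y Z u v w; apply: step_eqv_denote => t t0 t1.
  by rewrite !denote_sap //; apply: eqv_refl.
- by move=> X Y f x; apply: step_eqv_denote => t t0 t1; apply: eqv_refl.
- move=> X Y u y; apply: step_eqv_denote => t t0 t1.
  by rewrite !denote_sap //; apply: eqv_refl.
Qed.
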